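(* Let $L>0$, $\mu\in(-\infty,0]$, $\Delta>0$, $N\ge1$, step sizes $h_0,\dots,h_{N-1}$, and $\mathcal{I}^*=\{0,\dots,N,*\}$. The optimal value of the problem $$\max_{f\in\mathcal{F}_{\mu,L}(\mathbb{R}^d),\,x_0\in\mathbb{R}^d}\ \min_{0\le i\le N}\|\nabla f(x_i)\|^2\ \text{ s.t. } x_{i+1}=x_i-\tfrac{h_i}{L}\nabla f(x_i)\ (0\le i\le N-1),\ f(x_0)-f_*\le\Delta,$$ where $f_*$ denotes the global minimum value of $f$, equals the optimal value of the finite-dimensional problem $$\max_{\{(x_i,g_i,f_i)\}_{i\in\mathcal{I}^*}}\ \min_{0\le i\le N}\|g_i\|^2\ \text{ s.t. } \text{(IC) holds for all } i,j\in\mathcal{I}^*,\ x_{i+1}=x_i-\tfrac{h_i}{L}g_i\ (0\le i\le N-1),$$ $$f_i-\tfrac{1}{2L}\|g_i\|^2-f_*\ge0\ (0\le i\le N),\quad f_0-f_*\le\Delta,$$ where $(x_*,g_*,f_* )$ is the triplet with index $*$ and (IC) is the inequality $$f_i-f_j-\langle g_j,x_i-x_j\rangle\ge\frac{1}{2(1-\mu/L)}\Big(\frac1L\|g_i-g_j\|^2+\mu\|x_i-x_j\|^2-2\frac{\mu}{L}\langle g_j-g_i,x_j-x_i\rangle\Big).$$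
   Context: For $L>0$ and $\mu\le L$, $\mathcal{F}_{\mu,L}(\mathbb{R}^d)$ denotes the class of differentiable functions $f:\mathbb{R}^d\to\mathbb{R}$ such that both $\frac L2\|\cdot\|^2-f$ and $f-\frac{\mu}{2}\|\cdot\|^2$ are convex. *)

From mathcomp Require Import all_boot all_order all_algebra.
From mathcomp Require Import all_classical all_reals all_analysis.
Set Implicit Arguments. Unset Strict Implicit. Unset Printing Implicit Defensive.
Import Order.TTheory GRing.Theory Num.Theory.
Import numFieldNormedType.Exports.
Local Open Scope ring_scope.

Definition dotp (R : realType) (d : nat) (u v : 'rV[R]_d) : R :=
  \sum_(k < d) u ord0 k * v ord0 k.

Definition sqnorm (R : realType) (d : nat) (u : 'rV[R]_d) : R := dotp u u.

Definition is_gradient (R : realType) (d : nat) (f : 'rV[R]_d -> R)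
  (g : 'rV[R]_d -> 'rV[R]_d) : Prop :=
  forall x, differentiable f x /\ forall v, ('d f x : 'rV[R]_d -> R) v = dotp (g x) v.

Definition convex_fun (R : realType) (d : nat) (f : 'rV[R]_d -> R) : Prop :=
  forall (x y : 'rV[R]_d) (t : R), 0 <= t -> t <= 1 ->
    f (t *: x + (1 - t) *: y) <= t * f x + (1 - t) * f y.

Definition in_F (R : realType) (d : nat) (mu L : R) (f : 'rV[R]_d -> R)
  (g : 'rV[R]_d -> 'rV[R]_d) : Prop :=
  is_gradient f g /\
  convex_fun (fun x => L / 2 * sqnorm x - f x) /\
  convex_fun (fun x => f x - mu / 2 * sqnorm x).

Definition min_upto (R : realType) (N : nat) (v : nat -> R) : R :=
  \big[Num.min/v 0%N]_(i < N.+1) v i.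

Definition IC (R : realType) (d : nat) (mu L : R)
  (xi gi : 'rV[R]_d) (fi : R) (xj gj : 'rV[R]_d) (fj : R) : Prop :=
  fi - fj - dotp gj (xi - xj) >=
  1 / (2 * (1 - mu / L)) *
    (1 / L * sqnorm (gi - gj) + mu * sqnorm (xi - xj)
     - 2 * (mu / L) * dotp (gj - gi) (xj - xi)).

Definition values_fun (R : realType) (d : nat) (mu L Delta : R) (N : nat)
  (h : nat -> R) : set R :=
  [set r | exists (f : 'rV[R]_d -> R) (g : 'rV[R]_d -> 'rV[R]_d)
             (x : nat -> 'rV[R]_d) (xs : 'rV[R]_d),
     [/\ in_F mu L f g,
         (* xs is a global minimizer, so f_* = f xs *)
         (forall y, f xs <= f y),
         (forall i, (i < N)%N -> x i.+1 = x i - (h i / L) *: g (x i)),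
         f (x 0%N) - f xs <= Delta &
         r = min_upto N (fun i => sqnorm (g (x i)))]].

(* Index set I* = {0,...,N,*}, encoded as option nat with None = *. *)
Definition in_Istar (N : nat) (o : option nat) : bool :=
  if o is Some i then (i <= N)%N else true.

Definition values_pep (R : realType) (d : nat) (mu L Delta : R) (N : nat)
  (h : nat -> R) : set R :=
  [set r | exists (X G : option nat -> 'rV[R]_d) (F : option nat -> R),
     [/\ (forall i j, in_Istar N i -> in_Istar N j ->
            IC mu L (X i) (G i) (F i) (X j) (G j) (F j)),
         (forall i, (i < N)%N ->
            X (Some i.+1) = X (Some i) - (h i / L) *: G (Some i)),
         (forall i, (i <= N)%N ->
            F (Some i) - 1 / (2 * L) * sqnorm (G (Some i)) - F None >= 0),
         F (Some 0%N) - F None <= Delta &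
         r = min_upto N (fun i => sqnorm (G (Some i)))]].

From HB Require Import structures.
From mathcomp Require Import all_boot all_order all_algebra.
From mathcomp Require Import all_classical all_reals all_analysis.
From mathcomp Require Import ring lra.
Set Implicit Arguments. Unset Strict Implicit. Unset Printing Implicit Defensive.
Import Order.TTheory GRing.Theory Num.Theory.
Import numFieldNormedType.Exports.
Local Open Scope ring_scope.
Local Open Scope classical_set_scope.

(* Every f in F_{mu,L} satisfies (IC) between any two of its first-order triplets
   (compare its upper quadratic model at x with its lower one at y), and the
   gradient step x - g(x)/L gives f_* <= f(x) - |g(x)|^2/(2L); so each feasible
   pair (f, x_0) of the first problem yields a feasible point of the second with
   the same objective.  Conversely, (IC) among the indices 0..N says that the
   shifted data (x_i, g_i - mu x_i, f_i - mu/2 |x_i|^2) are interpolated by a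
   convex (L - mu)-smooth function: the conjugate of the max of the conjugates of
   their upper quadratic models.  Adding mu/2 |x|^2 back gives a function of
   F_{mu,L} through the data, whose minimum min_i (f_i - |g_i|^2/(2L)) >= f_* is
   attained at a gradient step. *)

Section InnerProduct.
Variables (R : realType) (d : nat).
Implicit Types (u v w : 'rV[R]_d) (a : R).

Lemma dotpC u v : dotp u v = dotp v u.
Proof. by apply: eq_bigr => k _; rewrite mulrC. Qed.

Lemma dotpDl u v w : dotp (u + v) w = dotp u w + dotp v w.
Proof. by rewrite /dotp -big_split; apply: eq_bigr => k _; rewrite !mxE mulrDl. Qed.

Lemma dotpZl a u v : dotp (a *: u) v = a * dotp u v.
Proof. by rewrite /dotp mulr_sumr; apply: eq_bigr => k _; rewrite !mxE mulrA. Qed.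

Lemma dotpNl u v : dotp (- u) v = - dotp u v.
Proof. by rewrite -scaleN1r dotpZl mulN1r. Qed.

Lemma dotpBl u v w : dotp (u - v) w = dotp u w - dotp v w.
Proof. by rewrite dotpDl dotpNl. Qed.

Lemma dotpDr u v w : dotp u (v + w) = dotp u v + dotp u w.
Proof. by rewrite dotpC dotpDl !(dotpC u). Qed.

Lemma dotpZr a u v : dotp u (a *: v) = a * dotp u v.
Proof. by rewrite dotpC dotpZl dotpC. Qed.

Lemma dotpNr u v : dotp u (- v) = - dotp u v.
Proof. by rewrite dotpC dotpNl dotpC. Qed.

Lemma dotpBr u v w : dotp u (v - w) = dotp u v - dotp u w.
Proof. by rewrite dotpDr dotpNr. Qed.

Lemma sqnormD u v : sqnorm (u + v) = sqnorm u + 2 * dotp u v + sqnorm v.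
Proof. by rewrite /sqnorm dotpDl !dotpDr (dotpC v u); ring. Qed.

Lemma sqnormN u : sqnorm (- u) = sqnorm u.
Proof. by rewrite /sqnorm dotpNl dotpNr opprK. Qed.

Lemma sqnormB u v : sqnorm (u - v) = sqnorm u - 2 * dotp u v + sqnorm v.
Proof. by rewrite sqnormD sqnormN dotpNr; ring. Qed.

Lemma sqnormZ a u : sqnorm (a *: u) = a ^+ 2 * sqnorm u.
Proof. by rewrite /sqnorm dotpZl dotpZr mulrA -expr2. Qed.

Lemma sqnorm0 : sqnorm (0 : 'rV[R]_d) = 0.
Proof. by rewrite -(scale0r 0) sqnormZ expr0n mul0r. Qed.

Lemma sqnorm_ge0 u : 0 <= sqnorm u.
Proof. by rewrite sumr_ge0 // => k _; rewrite -expr2 sqr_ge0. Qed.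

Lemma sqnorm_eq0 u : sqnorm u = 0 -> u = 0.
Proof.
move=> /eqP; rewrite psumr_eq0 => [/allP u0|k _]; last by rewrite -expr2 sqr_ge0.
apply/rowP => k; rewrite mxE.
by have := u0 k (mem_index_enum k); rewrite -expr2 sqrf_eq0 => /eqP.
Qed.

Lemma dotp_le_young c u w : 0 < c -> dotp u w - sqnorm w / (2 * c) <= c / 2 * sqnorm u.
Proof.
move=> c0; rewrite -subr_ge0.
have -> : c / 2 * sqnorm u - (dotp u w - sqnorm w / (2 * c))
    = sqnorm (c *: u - w) / (2 * c).
  by rewrite sqnormB sqnormZ dotpZl; field; rewrite gt_eqF.
by rewrite divr_ge0 ?sqnorm_ge0 // ltW // mulr_gt0.
Qed.

End InnerProduct.

Ltac dotp_expand :=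
  rewrite /sqnorm ?(dotpDl, dotpDr, dotpBl, dotpBr, dotpZl, dotpZr, dotpNl, dotpNr).

Section Topology.
Variables (R : realType) (d : nat).
Implicit Types (u v y : 'rV[R]_d).

Lemma dotp_continuous (T : topologicalType) (f g : T -> 'rV[R]_d) :
  continuous f -> continuous g -> continuous (fun t => dotp (f t) (g t)).
Proof.
move=> fc gc; rewrite /dotp.
have := @continuous_big R _ +%R 0 xpredT add_continuous T (index_enum 'I_d)
  (fun k t => f t ord0 k * g t ord0 k).
apply => k _ t; have coord := @coord_continuous R 1 d ord0 k.
by apply: continuousM; [exact: continuous_comp (fc t) (coord (f t))
                       | exact: continuous_comp (gc t) (coord (g t))].
Qed.

Lemma sqnorm_subr_continuous (a : 'rV[R]_d) : continuous (fun y : 'rV[R]_d => sqnorm (y - a)).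
Proof.
have sub_cont : continuous (fun y : 'rV[R]_d => y - a).
  by move=> y; apply: continuousB; [exact: cvg_id | exact: cst_continuous].
exact: (dotp_continuous sub_cont sub_cont).
Qed.

Definition dotpl u v := dotp u v.

Lemma dotpl_linear u : linear (dotpl u).
Proof. by move=> a v w; rewrite /dotpl dotpDr dotpZr. Qed.

HB.instance Definition _ u :=
  GRing.isLinear.Build R 'rV[R]_d R *:%R (dotpl u) (dotpl_linear u).

Lemma dotpl_continuous u : continuous (dotpl u).
Proof.
by apply: (@dotp_continuous _ (cst u) id) => v; [exact: cst_continuous | exact: cvg_id].
Qed.

Lemma row_entry_le_norm v k : `|v ord0 k| <= `|v|.
Proof.
have /mapP[j Hj ->] : `|v ord0 k| \in [seq `|v x.1 x.2| | x : 'I_1 * 'I_d].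
  by apply/mapP; exists (ord0, k) => //=; rewrite mem_enum.
by rewrite [leRHS]/Num.norm /= mx_normrE; apply/bigmax_geP; right => /=; exists j.
Qed.

Lemma sqnorm_le_norm v : sqnorm v <= d%:R * `|v| ^+ 2.
Proof.
apply: (@le_trans _ _ (\sum_(k < d) `|v| ^+ 2)); last first.
  by rewrite sumr_const card_ord mulr_natl.
apply: ler_sum => k _.
by rewrite -expr2 -real_normK ?num_real // lerXn2r ?nnegrE ?row_entry_le_norm.
Qed.

Lemma norm_le_1Dsqnorm y : `|y| <= 1 + sqnorm y.
Proof.
rewrite [leLHS]/Num.norm /= mx_normrE; apply: bigmax_le => [|[i k] _ /=].
  by rewrite addr_ge0 ?sqnorm_ge0.
rewrite (ord1 i); apply: (@le_trans _ _ (1 + `|y ord0 k| ^+ 2)).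
  by have := normr_ge0 (y ord0 k); nra.
rewrite lerD2l /sqnorm /dotp (bigD1 k) //= -expr2 real_normK ?num_real //.
by rewrite lerDl sumr_ge0 // => j _; rewrite -expr2 sqr_ge0.
Qed.

End Topology.

Lemma cvg_le_of_affine_bound (R : realType) (F : R -> R) (l B c : R) :
  F @ 0^' --> l -> (forall t, 0 < t -> t <= 1 -> F t <= B + c * t) -> l <= B.
Proof.
move=> Fl FB.
have Fl_right : F @ 0^'+ --> l.
  by apply: cvg_trans Fl; apply: cvg_app; apply: within_subset => t /= t0; rewrite gt_eqF.
have affine_right : (fun t => B + c * t) @ 0^'+ --> B.
  rewrite -[X in _ --> X]addr0 -[X in _ + X](mulr0 c).
  by apply: cvgD; [exact: cvg_cst | apply: cvgMr; exact: cvg_at_right_filter cvg_id].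
apply: (ler_cvg_to Fl_right affine_right).
near=> t; apply: FB; first by near: t; exact: nbhs_right_gt.
by near: t; apply: nbhs_right_le; exact: ltr01.
Unshelve. all: end_near.
Qed.

Section Gradient.
Variables (R : realType) (d : nat).
Implicit Types (f k : 'rV[R]_d -> R) (g w : 'rV[R]_d -> 'rV[R]_d) (u x v : 'rV[R]_d).

Lemma differential_of_quad_remainder f x u C :
  (forall v, `|f (v + x) - f x - dotp u v| <= C * sqnorm v) ->
  differentiable f x /\ forall v, 'd f x v = dotp u v.
Proof.
move=> fC.
have f_littleo : f \o shift x = cst (f x) + dotpl u +o_ (0 : 'rV[R]_d) id.
  apply/eqaddoP => eps e0.
  set K := `|C| * d%:R.
  have K0 : 0 <= K by rewrite mulr_ge0.
  have K1 : 0 < K + 1 by rewrite ltr_wpDl.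
  change (\forall v \near (0 : 'rV[R]_d),
    `|(f \o shift x - (cst (f x) + dotpl u)) v| <= eps * `|v|).
  apply/nbhs_norm0P; exists (eps / (K + 1)); first by rewrite /= divr_gt0.
  move=> v /= /ltW vsmall.
  rewrite opprD addrA; apply: le_trans (fC v) _.
  have Kv : K * `|v| <= eps.
    apply: (@le_trans _ _ (K * (eps / (K + 1)))); first by rewrite ler_wpM2l.
    by rewrite mulrA ler_pdivrMr // mulrDr mulr1 mulrC lerDl ltW.
  apply: (@le_trans _ _ (K * `|v| ^+ 2)); last by rewrite expr2 mulrA ler_wpM2r.
  apply: (@le_trans _ _ (`|C| * sqnorm v)).
    by rewrite ler_wpM2r ?sqnorm_ge0 // real_ler_norm // num_real.
  by rewrite /K -mulrA ler_wpM2l // sqnorm_le_norm.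
have df := diff_unique (@dotpl_continuous _ _ u) f_littleo.
split; last by move=> v; rewrite df.
by apply/diff_locallyP; rewrite df; split => //; exact: dotpl_continuous.
Qed.

Lemma convex_fun_slope_le k x v t : convex_fun k -> 0 < t -> t <= 1 ->
  k (x + t *: v) - k x <= t * (k (x + v) - k x).
Proof.
move=> kc t0 t1; have := kc (x + v) x t (ltW t0) t1.
have -> : t *: (x + v) + (1 - t) *: x = x + t *: v by apply/rowP => i; rewrite !mxE; ring.
lra.
Qed.

Lemma tangent_le_of_convex f g k a b x v :
  is_gradient f g -> convex_fun k -> (forall z, k z = a * sqnorm z + b * f z) ->
  k x + 2 * a * dotp x v + b * dotp (g x) v <= k (x + v).
Proof.
move=> fg kc kE; have [dfx dfv] := fg x.
have quotient_cvg :
    (fun t : R => b * (t^-1 *: ((f \o shift x) (t *: v) - f x))) @ 0^' --> b * dotp (g x) v.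
  by apply: cvgMr; rewrite -dfv -deriveE //; exact: diff_derivable.
suff : b * dotp (g x) v <= k (x + v) - k x - 2 * a * dotp x v by lra.
apply: (cvg_le_of_affine_bound (c := - a * sqnorm v) quotient_cvg) => t t0 t1.
have slope := convex_fun_slope_le x v kc t0 t1.
rewrite !kE sqnormD sqnormZ dotpZr in slope.
rewrite /= /shift /= (addrC (t *: v) x) -(ler_pM2l t0).
rewrite (_ : t * (b * _) = b * (f (x + t *: v) - f x)); last first.
  by rewrite /GRing.scale /=; field; rewrite gt_eqF.
rewrite !kE; lra.
Qed.

Lemma convex_of_tangent_minorants k w :
  (forall z v, k z + dotp (w z) v <= k (z + v)) -> convex_fun k.
Proof.
move=> kw x y t t0 t1; set z := t *: x + (1 - t) *: y.
have := kw z (x - z); have := kw z (y - z); rewrite !(addrC z) !subrK => hy hx.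
have balanced : t * dotp (w z) (x - z) + (1 - t) * dotp (w z) (y - z) = 0.
  rewrite -!dotpZr -dotpDr (_ : _ + _ = 0) ?dotpZr; last first.
    by apply/rowP => i; rewrite !mxE; ring.
  by rewrite -(scale0r 0) dotpZr mul0r.
have t1' : 0 <= 1 - t by lra.
rewrite -subr_ge0 in hx; rewrite -subr_ge0 in hy.
have := addr_ge0 (mulr_ge0 t0 hx) (mulr_ge0 t1' hy).
lra.
Qed.

Lemma in_F_of_quad_bounds mu L f g :
  (forall x v, f x + dotp (g x) v + mu / 2 * sqnorm v <= f (x + v)) ->
  (forall x v, f (x + v) <= f x + dotp (g x) v + L / 2 * sqnorm v) ->
  in_F mu L f g.
Proof.
move=> lb ub; split; [|split].
- move=> x; apply: (differential_of_quad_remainder (C := `|mu| / 2 + `|L| / 2)) => v.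
  have hmu : - `|mu| / 2 <= mu / 2 by have := ler_norm (- mu); rewrite normrN; lra.
  have hL : L / 2 <= `|L| / 2 by have := ler_norm L; lra.
  have := ler_wpM2r (sqnorm_ge0 v) hmu; have := ler_wpM2r (sqnorm_ge0 v) hL.
  have := mulr_ge0 (normr_ge0 mu) (sqnorm_ge0 v); have := mulr_ge0 (normr_ge0 L) (sqnorm_ge0 v).
  have := lb x v; have := ub x v; rewrite (addrC v x) => *.
  by rewrite ler_norml; apply/andP; split; lra.
- apply: (convex_of_tangent_minorants (w := fun z => L *: z - g z)) => z v.
  by have := ub z v; rewrite sqnormD dotpBl dotpZl; lra.
- apply: (convex_of_tangent_minorants (w := fun z => g z - mu *: z)) => z v.
  by have := lb z v; rewrite sqnormD dotpBl dotpZl; lra.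
Qed.

Lemma in_F_quad_ub mu L f g x v : in_F mu L f g ->
  f (x + v) <= f x + dotp (g x) v + L / 2 * sqnorm v.
Proof.
move=> [fg [kc _]]; have kE z : L / 2 * sqnorm z - f z = L / 2 * sqnorm z + -1 * f z by ring.
by have := tangent_le_of_convex x v fg kc kE; rewrite sqnormD; lra.
Qed.

Lemma in_F_quad_lb mu L f g x v : in_F mu L f g ->
  f x + dotp (g x) v + mu / 2 * sqnorm v <= f (x + v).
Proof.
move=> [fg [_ kc]]; have kE z : f z - mu / 2 * sqnorm z = - (mu / 2) * sqnorm z + 1 * f z by ring.
by have := tangent_le_of_convex x v fg kc kE; rewrite sqnormD; lra.
Qed.

End Gradient.

Lemma ler_of_sub_eq (R : numDomainType) (a b c e : R) : a <= b -> e - c = b - a -> c <= e.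
Proof. by move=> ab eq; rewrite -subr_ge0 eq subr_ge0. Qed.

Lemma le_of_onemM_le (R : realFieldType) (A B : R) :
  (forall t, 0 < t -> t < 1 -> (1 - t) * A <= B) -> A <= B.
Proof.
move=> AB; rewrite leNgt; apply/negP => BA.
have half0 : 0 < 1 / 2 :> R by lra.
have half1 : 1 / 2 < 1 :> R by lra.
have halfAB := AB _ half0 half1.
set t := (A - B) / (2 * A).
have t0 : 0 < t by apply: divr_gt0; lra.
have A0 : 0 < A by lra.
have t1 : t < 1 by rewrite /t ltr_pdivrMr ?mulr_gt0 //; lra.
have := AB t t0 t1.
have -> : (1 - t) * A = (A + B) / 2 by rewrite /t; field; rewrite gt_eqF.
lra.
Qed.

Lemma gradient_step_gain (R : realType) (d : nat) (L : R) (g : 'rV[R]_d) : 0 < L ->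
  dotp g (- (L^-1 *: g)) + L / 2 * sqnorm (- (L^-1 *: g)) = - (1 / (2 * L) * sqnorm g).
Proof. by move=> L0; rewrite dotpNr dotpZr sqnormN sqnormZ -/(sqnorm g); field; rewrite gt_eqF. Qed.

Lemma in_F_IC (R : realType) (d : nat) (mu L : R) (f : 'rV[R]_d -> R) g x y :
  0 < L -> mu < L -> in_F mu L f g -> IC mu L x (g x) (f x) y (g y) (f y).
Proof.
move=> L0 muL fF; rewrite /IC.
have Lmu0 : L - mu != 0 by rewrite subr_eq0 gt_eqF.
(* z minimizes the gap between the upper quadratic model of f at x and the lower
   one at y; the value of that gap at z is exactly the slack in (IC). *)
set z := x - (L - mu)^-1 *: ((g x - g y) - mu *: (x - y)).
have := in_F_quad_lb y (z - y) fF; have := in_F_quad_ub x (z - x) fF.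
rewrite !(addrC _ (z - _)) !subrK => ub lb.
apply: (ler_of_sub_eq (le_trans lb ub)); rewrite /z.
dotp_expand.
rewrite ?(dotpC y x) ?(dotpC (g x) x) ?(dotpC (g y) x) ?(dotpC (g x) y) ?(dotpC (g y) y)
  ?(dotpC (g y) (g x)).
by field; rewrite Lmu0 gt_eqF.
Qed.

Section Minimizers.
Variables (R : realType) (d : nat).
Implicit Types (k : 'rV[R]_d -> R) (y ys : 'rV[R]_d).

Lemma ex_minimizer_coercive k c K :
  continuous k -> 0 < c -> (forall y, sqnorm y / c - K <= k y) ->
  exists ys, forall y, k ys <= k y.
Proof.
move=> kc c0 kK.
set A := [set y | k y <= k 0].
have A_bounded y : A y -> sqnorm y <= (k 0 + K) * c.
  by rewrite /A /= => Ay; rewrite -ler_pdivrMr //; have := kK y; lra.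
have A_compact : compact A.
  apply: bounded_closed_compact.
    rewrite /= /bounded_near; near=> M => y /A_bounded yA /=.
    apply: le_trans (norm_le_1Dsqnorm y) _.
    have : 1 + (k 0 + K) * c <= M by near: M; apply: nbhs_pinfty_ge; exact: num_real.
    lra.
  rewrite (_ : A = k @^-1` [set r | r <= k 0]) //.
  by apply: preimage_closed => [y _|]; [exact: kc | exact: closed_le].
have [ys Ays ysmin] := compact_EVT_min (ex_intro A 0 (lexx _)) A_compact (continuous_subspaceT kc).
exists ys => y; have kys : k ys <= k 0 by apply: ysmin; rewrite inE /A /=.
have [ky|/ltW ky] := lerP (k y) (k 0); first by apply: ysmin; rewrite inE.
exact: le_trans kys ky.
Unshelve. all: end_near.
Qed.

Definition strongly_convex (s : R) k := forall y1 y2 t, 0 < t -> t < 1 ->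
  k (y1 + t *: (y2 - y1)) <= (1 - t) * k y1 + t * k y2 - s / 2 * (t * (1 - t)) * sqnorm (y2 - y1).

Lemma strongly_convex_min_growth s k ys : strongly_convex s k ->
  (forall y, k ys <= k y) -> forall y, k ys + s / 2 * sqnorm (y - ys) <= k y.
Proof.
move=> kc ysmin y.
suff : s / 2 * sqnorm (y - ys) <= k y - k ys by lra.
apply: le_of_onemM_le => t t0 t1; rewrite -(ler_pM2l t0).
by have := le_trans (ysmin (ys + t *: (y - ys))) (kc ys y t t0 t1); lra.
Qed.

End Minimizers.

Section Interpolation.
Variables (R : realType) (d : nat) (mu L : R) (N : nat).
Variables (X G : nat -> 'rV[R]_d) (F : nat -> R).
Hypotheses (L_gt0 : 0 < L) (mu_le0 : mu <= 0).
Hypothesis XGF_IC : forall i j, (i <= N)%N -> (j <= N)%N ->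
  IC mu L (X i) (G i) (F i) (X j) (G j) (F j).
Implicit Types (x v y : 'rV[R]_d).

Let Lmu := L - mu.
Let Lmu_gt0 : 0 < Lmu. Proof. by rewrite subr_gt0 (le_lt_trans mu_le0). Qed.
Let L_mu_neq0 : L - mu != 0. Proof. exact: lt0r_neq0. Qed.
Let L_neq0 : L != 0. Proof. by rewrite gt_eqF. Qed.

(* [(X i, gsh i, fsh i)] are data of the convex, (L - mu)-smooth function
   f - mu/2 |.|^2, and [qpiece i] is the convex conjugate of its upper quadratic
   model at [X i]; the interpolant is mu/2 |.|^2 plus the conjugate of [qmax N]. *)
Definition gsh i := G i - mu *: X i.
Definition fsh i := F i - mu / 2 * sqnorm (X i).
Definition qpiece i y := - fsh i + dotp (X i) y + sqnorm (y - gsh i) / (2 * Lmu).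

Fixpoint qmax n y := if n is n'.+1 then Num.max (qmax n' y) (qpiece n y) else qpiece 0 y.

Lemma qmax_ge n i y : (i <= n)%N -> qpiece i y <= qmax n y.
Proof.
elim: n => [|n IH] /=; first by rewrite leqn0 => /eqP ->.
by rewrite leq_eqVlt => /orP[/eqP -> | /IH]; rewrite le_max ?lexx ?orbT // => ->.
Qed.

Lemma qmax_le n y B : (forall i, (i <= n)%N -> qpiece i y <= B) -> qmax n y <= B.
Proof.
elim: n => [|n IH] qB /=; first exact: qB.
by rewrite ge_max qB // andbT; apply: IH => i /leqW; exact: qB.
Qed.

Lemma qpiece_continuous i : continuous (qpiece i).
Proof.
move=> y; exact: (cvgD (cvgD (cvg_cst _) (@dotpl_continuous _ _ (X i) y))
  (cvgM (@sqnorm_subr_continuous _ _ (gsh i) y) (cvg_cst _))).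
Qed.

Lemma qmax_continuous n : continuous (qmax n).
Proof.
elim: n => [|n IH] /=; first exact: qpiece_continuous.
exact: max_fun_continuous IH (@qpiece_continuous n.+1).
Qed.

Lemma qpiece_le_at_gsh i j : (i <= N)%N -> (j <= N)%N -> qpiece j (gsh i) <= qpiece i (gsh i).
Proof.
move=> iN jN; apply: (ler_of_sub_eq (XGF_IC jN iN)); rewrite /qpiece /gsh /fsh.
dotp_expand.
rewrite ?(dotpC (X i) (X j)) ?(dotpC (G i) (X j)) ?(dotpC (G j) (X j))
  ?(dotpC (G i) (X i)) ?(dotpC (G j) (X i)) ?(dotpC (G j) (G i)).
by rewrite /Lmu; field; rewrite L_neq0 L_mu_neq0.
Qed.

Lemma qmax_gsh i : (i <= N)%N -> qmax N (gsh i) = qpiece i (gsh i).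
Proof.
move=> iN; apply/eqP; rewrite eq_le qmax_ge // andbT.
by apply: qmax_le => j jN; exact: qpiece_le_at_gsh.
Qed.

Definition tilt x y := qmax N y - dotp x y.

Lemma tilt_strongly_convex x : strongly_convex Lmu^-1 (tilt x).
Proof.
move=> y1 y2 t t0 t1; rewrite /tilt dotpDr dotpZr dotpBr.
suff : qmax N (y1 + t *: (y2 - y1)) <=
    (1 - t) * qmax N y1 + t * qmax N y2 - Lmu^-1 / 2 * (t * (1 - t)) * sqnorm (y2 - y1) by lra.
apply: qmax_le => j jN.
have -> : qpiece j (y1 + t *: (y2 - y1)) = (1 - t) * qpiece j y1 + t * qpiece j y2
    - Lmu^-1 / 2 * (t * (1 - t)) * sqnorm (y2 - y1).
  rewrite /qpiece; dotp_expand.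
  rewrite ?(dotpC y2 y1) ?(dotpC (gsh j) y1) ?(dotpC (gsh j) y2) ?(dotpC y2 (X j))
    ?(dotpC y1 (X j)).
  by rewrite /Lmu; field; rewrite ?L_neq0 ?L_mu_neq0.
have := qmax_ge y1 jN; have := qmax_ge y2 jN => q2 q1.
have : (1 - t) * qpiece j y1 <= (1 - t) * qmax N y1 by rewrite ler_wpM2l //; lra.
have : t * qpiece j y2 <= t * qmax N y2 by rewrite ler_wpM2l // ltW.
lra.
Qed.

Lemma tilt_continuous x : continuous (tilt x).
Proof. by move=> y; exact: (cvgB (@qmax_continuous N y) (@dotpl_continuous _ _ x y)). Qed.

Lemma ex_tilt_min x : exists ys, forall y, tilt x ys <= tilt x y.
Proof.
set w := (X 0 - x) - Lmu^-1 *: gsh 0.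
apply: (ex_minimizer_coercive (@tilt_continuous x) (_ : 0 < 4 * Lmu) (K := fsh 0 + Lmu * sqnorm w)).
  by rewrite mulr_gt0.
move=> y; apply: (le_trans _ (_ : qpiece 0 y - dotp x y <= _)); last first.
  by rewrite lerB // qmax_ge.
rewrite -subr_ge0.
have -> : qpiece 0 y - dotp x y - (sqnorm y / (4 * Lmu) - (fsh 0 + Lmu * sqnorm w)) =
    sqnorm (y + (2 * Lmu) *: w) / (4 * Lmu) + sqnorm (gsh 0) / (2 * Lmu).
  rewrite /qpiece /w; dotp_expand.
  rewrite ?(dotpC (X 0) y) ?(dotpC (gsh 0) y) ?(dotpC x y) ?(dotpC (X 0) x)
    ?(dotpC (gsh 0) (X 0)) ?(dotpC (gsh 0) x).
  by rewrite /Lmu; field; rewrite ?L_neq0 ?L_mu_neq0.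
by apply: addr_ge0; apply: divr_ge0; rewrite ?sqnorm_ge0 // mulr_ge0 // ltW.
Qed.

Definition ymin x := projT1 (cid (ex_tilt_min x)).

Lemma ymin_min x y : tilt x (ymin x) <= tilt x y.
Proof. exact: (projT2 (cid (ex_tilt_min x))). Qed.

Lemma ymin_growth x y : tilt x (ymin x) + sqnorm (y - ymin x) / (2 * Lmu) <= tilt x y.
Proof.
have := strongly_convex_min_growth (tilt_strongly_convex x) (@ymin_min x) y.
rewrite (_ : Lmu^-1 / 2 * _ = sqnorm (y - ymin x) / (2 * Lmu)) //.
by rewrite /Lmu; field; rewrite L_mu_neq0.
Qed.

Definition interp x := mu / 2 * sqnorm x - tilt x (ymin x).
Definition interp_grad x := ymin x + mu *: x.

Lemma interp_ge x y : mu / 2 * sqnorm x - tilt x y <= interp x.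
Proof. by have := ymin_min x y; rewrite /interp; lra. Qed.

Lemma interp_quad_lb x v : interp x + dotp (interp_grad x) v + mu / 2 * sqnorm v <= interp (x + v).
Proof.
apply: le_trans (interp_ge (x + v) (ymin x)).
rewrite /interp /interp_grad /tilt sqnormD dotpDl dotpDl dotpZl (dotpC v (ymin x)).
lra.
Qed.

Lemma interp_quad_ub x v : interp (x + v) <= interp x + dotp (interp_grad x) v + L / 2 * sqnorm v.
Proof.
set y := ymin (x + v).
have growth := ymin_growth x y.
have young := dotp_le_young v (y - ymin x) Lmu_gt0.
rewrite /interp -/y /interp_grad /tilt in growth *.
rewrite dotpBr (dotpC v y) (dotpC v (ymin x)) in young.
rewrite (sqnormD x v) (dotpDl x v y) (dotpDl (ymin x)) dotpZl (dotpC v y).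
by move: growth young; rewrite /tilt /Lmu; lra.
Qed.

Lemma interp_in_F : in_F mu L interp interp_grad.
Proof. exact: in_F_of_quad_bounds interp_quad_lb interp_quad_ub. Qed.

Lemma interp_ge_of_lb c : (forall i, (i <= N)%N -> c <= F i - 1 / (2 * L) * sqnorm (G i)) ->
  forall x, c <= interp x.
Proof.
move=> cF x; apply: le_trans (interp_ge x ((- mu) *: x)).
suff : qmax N ((- mu) *: x) <= mu / 2 * sqnorm x + dotp x ((- mu) *: x) - c by rewrite /tilt; lra.
apply: qmax_le => i iN.
(* The one place where mu <= 0 is needed; elsewhere mu < L suffices. *)
have gap : mu / 2 * sqnorm x + dotp x ((- mu) *: x) - qpiece i ((- mu) *: x)
    - (F i - 1 / (2 * L) * sqnorm (G i))
    = - mu / (2 * L * Lmu) * sqnorm (L *: (x - X i) + G i).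
  rewrite /qpiece /gsh /fsh; dotp_expand.
  rewrite ?(dotpC (X i) x) ?(dotpC (G i) x) ?(dotpC (G i) (X i)).
  by rewrite /Lmu; field; rewrite ?L_neq0 ?L_mu_neq0.
have : 0 <= - mu / (2 * L * Lmu) * sqnorm (L *: (x - X i) + G i).
  by rewrite mulr_ge0 ?sqnorm_ge0 // divr_ge0 ?oppr_ge0 // !mulr_ge0 // ltW.
by have := cF i iN; lra.
Qed.

Lemma ymin_X i : (i <= N)%N -> ymin (X i) = gsh i.
Proof.
move=> iN.
have gsh_min y : tilt (X i) (gsh i) <= tilt (X i) y.
  apply: (@le_trans _ _ (qpiece i y - dotp (X i) y)); last by rewrite lerB // qmax_ge.
  rewrite /tilt qmax_gsh // /qpiece subrr sqnorm0 mul0r addr0.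
  have : 0 <= sqnorm (y - gsh i) / (2 * Lmu) by rewrite divr_ge0 ?sqnorm_ge0 // mulr_ge0 // ltW.
  lra.
have := ymin_growth (X i) (gsh i); have := gsh_min (ymin (X i)).
move=> le1 le2; have : sqnorm (gsh i - ymin (X i)) / (2 * Lmu) <= 0 by lra.
rewrite pmulr_lle0 ?invr_gt0 ?mulr_gt0 // => sq0.
have /sqnorm_eq0/eqP : sqnorm (gsh i - ymin (X i)) = 0 by apply/eqP; rewrite eq_le sq0 sqnorm_ge0.
by rewrite subr_eq0 => /eqP.
Qed.

Lemma interp_X i : (i <= N)%N -> interp (X i) = F i.
Proof.
move=> iN; rewrite /interp ymin_X // /tilt qmax_gsh // /qpiece /fsh subrr sqnorm0.
by rewrite -/(sqnorm (X i)); lra.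
Qed.

Lemma interp_grad_X i : (i <= N)%N -> interp_grad (X i) = G i.
Proof. by move=> iN; rewrite /interp_grad ymin_X // /gsh subrK. Qed.

End Interpolation.

Section ValueSets.
Variables (R : realType) (d : nat) (mu L Delta : R) (N : nat) (h : nat -> R).
Hypothesis L_gt0 : 0 < L.

Lemma values_fun_sub_pep : mu < L ->
  values_fun d mu L Delta N h `<=` values_pep d mu L Delta N h.
Proof.
move=> muL r [f [g [x [xs [fF xs_min step f0 ->]]]]].
exists (fun o => if o is Some i then x i else xs),
  (fun o => g (if o is Some i then x i else xs)),
  (fun o => f (if o is Some i then x i else xs)).
split => //.
- by move=> [i|] [j|] _ _; exact: in_F_IC.
- move=> i _ /=; have := xs_min (x i + - (L^-1 *: g (x i))).
  have := gradient_step_gain (g (x i)) L_gt0.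
  by have := in_F_quad_ub (x i) (- (L^-1 *: g (x i))) fF; lra.
Qed.

Lemma values_pep_sub_fun : mu <= 0 ->
  values_pep d mu L Delta N h `<=` values_fun d mu L Delta N h.
Proof.
move=> mu_le0 r [X [G [F [XGF_IC step F_lb F0 ->]]]].
pose Xs i := X (Some i); pose Gs i := G (Some i); pose Fs i := F (Some i).
have XGFs_IC i j : (i <= N)%N -> (j <= N)%N ->
    IC mu L (Xs i) (Gs i) (Fs i) (Xs j) (Gs j) (Fs j).
  by move=> iN jN; exact: (XGF_IC (Some i) (Some j) iN jN).
set f := interp N Xs Gs Fs L_gt0 mu_le0.
set g := interp_grad N Xs Gs Fs L_gt0 mu_le0.
have fX i : (i <= N)%N -> f (Xs i) = Fs i by exact: interp_X.
have gX i : (i <= N)%N -> g (Xs i) = Gs i by exact: interp_grad_X.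
pose c i := Fs i - 1 / (2 * L) * sqnorm (Gs i).
have [i0 _ i0_min] := @arg_minP _ R 'I_N.+1 ord0 xpredT (fun i => c i) isT.
have i0N : (i0 <= N)%N by rewrite -ltnS.
(* The minimum value of the interpolant is min_i c i, attained one gradient step from X i0. *)
have f_ge y : c i0 <= f y.
  by apply: interp_ge_of_lb => i iN; exact: (i0_min (@Ordinal N.+1 i iN) isT).
have f_step : f (Xs i0 + - (L^-1 *: Gs i0)) <= c i0.
  have := gradient_step_gain (Gs i0) L_gt0.
  have := interp_quad_ub N Xs Gs Fs L_gt0 mu_le0 (Xs i0) (- (L^-1 *: Gs i0)).
  by rewrite -/f -/g gX // fX // /c; lra.
exists f, g, Xs, (Xs i0 + - (L^-1 *: Gs i0)); split.
- exact: interp_in_F.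
- by move=> y; exact: le_trans f_step (f_ge y).
- by move=> i iN; rewrite /Xs step // gX // ltnW.
- have := f_ge (Xs i0 + - (L^-1 *: Gs i0)); have := F_lb i0 i0N.
  by rewrite fX // /c /Fs /Gs; lra.
- by rewrite /min_upto gX //; apply: eq_bigr => i _; rewrite gX // -ltnS ltn_ord.
Qed.

End ValueSets.

Theorem propositionC2 (R : realType) (d : nat) (L mu Delta : R) (N : nat)
  (h : nat -> R) :
  0 < L -> mu <= 0 -> 0 < Delta -> (1 <= N)%N ->
  ereal_sup [set r%:E | r in values_fun d mu L Delta N h] =
  ereal_sup [set r%:E | r in values_pep d mu L Delta N h].
Proof.
(* The two sets of objective values already coincide, for any Delta and N. *)
move=> L_gt0 mu_le0 _ _.
have muL : mu < L := le_lt_trans mu_le0 L_gt0.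
congr (ereal_sup [set _%:E | _ in _]); apply/seteqP; split.
- exact: values_fun_sub_pep.
- exact: values_pep_sub_fun.
Qed.
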